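(* Let $n\ge 1$ and let $\mathbf F$ be a family of subsets of $[n]$ such that $f(\mathbf F)\neq 0$, where $f(\mathbf F)=\sum_{\mathcal G} (-1)^{|\mathcal G|+1}$, the sum running over all nonempty subfamilies $\mathcal G\subseteq\mathbf F$ with $\bigcup_{G\in\mathcal G}G=[n]$. Then $\max\{r(\mathbf F),t(\mathbf F)\}\ge\sqrt n$.
   Context: $[n]=\{1,\dots,n\}$. The rank $r(\mathbf F)$ is the largest cardinality of a member of $\mathbf F$. $t(\mathbf F)$ is the largest $t$ for which there exist $F_1,\dots,F_t\in\mathbf F$ and elements $x_1,\dots,x_t$ with $x_i\in F_j$ iff $i=j$ (for all $1\le i,j\le t$). *)

From mathcomp Require Import all_boot all_order all_algebra.
Set Implicit Arguments. Unset Strict Implicit. Unset Printing Implicit Defensive.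
Import GRing.Theory.

Definition fF (n : nat) (F : {set {set 'I_n}}) : int :=
  (\sum_(G in powerset F | (G != set0) && (\bigcup_(X in G) X == [set: 'I_n]))
      (-1) ^+ (#|G|).+1)%R.

(* rank: largest cardinality of a member of F (0 if F is empty) *)
Definition rank (n : nat) (F : {set {set 'I_n}}) : nat :=
  \max_(X in F) #|X|.

Definition tpred (n : nat) (F : {set {set 'I_n}}) (t : nat) : bool :=
  [exists Fs : {ffun 'I_t -> {set 'I_n}}, exists xs : {ffun 'I_t -> 'I_n},
     [forall i, Fs i \in F] &&
     [forall i, forall j, (xs i \in Fs j) == (i == j)]].

(* t(F): largest such t (any such t is <= n since the x_i are distinct) *)
Definition tF (n : nat) (F : {set {set 'I_n}}) : nat :=
  \max_(t < n.+1 | tpred F t) t.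

From mathcomp Require Import all_boot all_order all_algebra.

Set Implicit Arguments.
Unset Strict Implicit.
Unset Printing Implicit Defensive.

(* Since f(F) <> 0, some subfamily of F covers [n]; take a minimal one, G.
   By minimality every member of G has a private point, lying in no other
   member, so the members of G with their private points witness t(F) >= |G|.
   On the other hand n = |cover G| <= |G| r(F), hence n <= max(r(F), t(F))^2. *)

Section MinimalCovers.

Variable T : finType.

Definition subcover (F : {set {set T}}) (A : {set T}) (G : {set {set T}}) : bool :=
  (G \subset F) && (cover G == A).

Definition private_point (G : {set {set T}}) (X : {set T}) (x : T) : bool :=
  [forall Y in G, (x \in Y) == (Y == X)].

Lemma minset_subcover_private F A G X :
    minset (subcover F A) G -> X \in G ->
  exists x, private_point G X x.
Proof.
move=> /minsetP [/andP [GF /eqP covG] minG] XG.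
have ncov : cover (G :\ X) != cover G.
  apply/negP => /eqP covGX.
  suff /setP /(_ X) : G :\ X = G by rewrite !inE eqxx XG.
  apply: minG (subD1set G X).
  by rewrite /subcover (subset_trans (subD1set G X) GF) covGX covG eqxx.
have [x /andP [xGX xG]] : exists x, (x \notin cover (G :\ X)) && (x \in cover G).
  apply/existsP; apply: contraR ncov; rewrite negb_exists => /forallP nx.
  apply/eqP/setP => x; apply/idP/idP => [|xG].
    by case/bigcupP => Y /setD1P [_ YG] xY; apply/bigcupP; exists Y.
  by have := nx x; rewrite xG andbT negbK.
have privY Y : Y \in G -> x \in Y -> Y = X.
  move=> YG xY; apply/eqP; apply: contraR xGX => YX.
  by apply/bigcupP; exists Y; rewrite // !inE YX.
exists x; apply/forall_inP => Y YG; apply/eqP; apply/idP/idP => [/privY -> //|/eqP ->].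
have /bigcupP [Z ZG xZ] := xG.
by rewrite -(privY Z).
Qed.

End MinimalCovers.

Section FamiliesOnOrdinal.

Variables (n : nat) (F : {set {set 'I_n}}).

Lemma fF_neq0_cover :
  fF F != 0%R -> exists G, subcover F [set: 'I_n] G.
Proof.
move=> fF_neq0; apply/existsP; apply: contraNT fF_neq0 => /existsPn noG.
rewrite /fF big_pred0 // => G.
by rewrite powersetE andbCA -[_ && (_ == _)]/(subcover F _ G) (negbTE (noG G)) andbF.
Qed.

Lemma tpred_of_private (G : {set {set 'I_n}}) :
  G \subset F -> (forall X, X \in G -> exists x, private_point G X x) -> tpred F #|G|.
Proof.
move=> GF privG.
have [xs hxs] := fin_all_exists (fun i : 'I_#|G| => privG _ (enum_valP i)).
apply/existsP; exists [ffun i => enum_val i]; apply/existsP; exists [ffun i => xs i].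
apply/andP; split; apply/forallP => i.
  by rewrite ffunE (subsetP GF) ?enum_valP.
apply/forallP => j; rewrite !ffunE.
have /forall_inP /(_ _ (enum_valP j)) := hxs i.
by rewrite (inj_eq enum_val_inj) [j == i]eq_sym.
Qed.

(* tF only ranges over t <= n, so we first show the points x_i are distinct. *)
Lemma tpred_leq_tF t : tpred F t -> t <= tF F.
Proof.
move=> tp; have [Fs /existsP [xs /andP [_ /forallP hx]]] := existsP tp.
have xs_inj : injective xs.
  move=> i j eq_xs; have /forallP /(_ j) /eqP := hx i.
  by rewrite eq_xs (eqP (forallP (hx j) j)) eqxx => /esym /eqP.
have tn : t < n.+1 by have := leq_card _ xs_inj; rewrite !card_ord.
exact: (@leq_bigmax_cond _ (fun s : 'I_n.+1 => tpred F s) val (Ordinal tn)).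
Qed.

Lemma card_cover_leq_rank (G : {set {set 'I_n}}) :
  G \subset F -> #|cover G| <= #|G| * rank F.
Proof.
move=> GF; apply: leq_trans (leq_card_cover G).1 _.
rewrite -sum_nat_const; apply: leq_sum => X XG.
exact: leq_bigmax_cond (subsetP GF X XG).
Qed.

End FamiliesOnOrdinal.

Theorem lemma3p3 (n : nat) (F : {set {set 'I_n}}) :
  1 <= n -> fF F <> 0%R -> n <= (maxn (rank F) (tF F)) ^ 2.
Proof.
move=> _ /eqP /fF_neq0_cover [G0 coverG0].
have [G minG _] := minset_exists coverG0.
have /andP [GF /eqP covG] := minsetp minG.
have Gt : #|G| <= tF F.
  by apply/tpred_leq_tF/tpred_of_private => // X; apply: minset_subcover_private minG.
have := card_cover_leq_rank GF; rewrite covG cardsT card_ord => nGr.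
apply: leq_trans nGr _; rewrite expnS expn1 mulnC.
by apply: leq_mul; [apply: leq_maxl | apply: leq_trans Gt (leq_maxr _ _)].
Qed.
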